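(* Let $r\ge1$, let $a_1,\dots,a_r\ge 2$ and $a,b$ be positive integers, and let $H_1,\dots,H_r$ be graphs. If $\max\{a_1,\dots,a_r\}\le a$ and $\max\{cl(H_1),\dots,cl(H_r)\}\le b$, then $$F_v(K_{a_1}[H_1],\dots,K_{a_r}[H_r];ab+1)\le F_v(a_1,\dots,a_r;a+1)\,F_v(H_1,\dots,H_r;b+1).$$
   Context: All graphs are finite and simple. ''A graph $F$ contains $H$'' means $F$ has a (not necessarily induced) subgraph isomorphic to $H$. An integer $a$ used in place of a graph denotes $K_a$. $cl(H)$ is the clique number of $H$. $G\rightarrow(H_1,\dots,H_r)^v$ means: for every partition $V(G)=X_1\cup\dots\cup X_r$ there is $i$ such that the subgraph induced by $X_i$ contains $H_i$. $\mathcal{F}_v(H_1,\dots,H_r;k)$ is the set of $K_k$-free graphs $G$ with $G\rightarrow(H_1,\dots,H_r)^v$, and the vertex Folkman number $F_v(H_1,\dots,H_r;k)$ is the minimum number of vertices of a graph in this set (these numbers are finite when $k>\max_i cl(H_i)$). The lexicographic product $G[H]$ has vertex set $V(G)\times V(H)$, with $\{(u_1,v_1),(u_2,v_2)\}$ an edge iff $\{u_1,u_2\}\in E(G)$, or $u_1=u_2$ and $\{v_1,v_2\}\in E(H)$. *)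

From mathcomp Require Import all_boot.
Set Implicit Arguments. Unset Strict Implicit. Unset Printing Implicit Defensive.

Record sgraph := SGraph {
  V : finType;
  adj : rel V;
  adj_sym : symmetric adj;
  adj_irr : irreflexive adj }.

Definition contains (F H : sgraph) : Prop :=
  exists f : V H -> V F, injective f /\ forall x y, adj x y -> adj (f x) (f y).

Definition contains_in (G : sgraph) (X : {set V G}) (H : sgraph) : Prop :=
  exists f : V H -> V G, injective f /\ (forall x, f x \in X) /\
    forall x y, adj x y -> adj (f x) (f y).

Lemma K_sym k : symmetric (fun x y : 'I_k => x != y).
Proof. by move=> x y; rewrite eq_sym. Qed.
Lemma K_irr k : irreflexive (fun x y : 'I_k => x != y).
Proof. by move=> x; rewrite eqxx. Qed.
Definition K (k : nat) : sgraph := SGraph (@K_sym k) (@K_irr k).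

Definition is_clique (G : sgraph) (S : {set V G}) : bool :=
  [forall x in S, forall y in S, (x != y) ==> adj x y].
Definition clique_number (G : sgraph) : nat :=
  \max_(S : {set V G} | is_clique S) #|S|.

Definition lex_adj (G H : sgraph) (p q : V G * V H) : bool :=
  adj p.1 q.1 || ((p.1 == q.1) && adj p.2 q.2).
Arguments lex_adj : clear implicits.
Lemma lex_sym (G H : sgraph) : symmetric (lex_adj G H).
Proof. move=> [u1 v1] [u2 v2]; rewrite /lex_adj /= (@adj_sym G u1) (@eq_sym _ u1) (@adj_sym H v1). by []. Qed.
Lemma lex_irr (G H : sgraph) : irreflexive (lex_adj G H).
Proof. move=> [u v]; by rewrite /lex_adj /= (@adj_irr G) (@adj_irr H) andbF. Qed.
Definition lex (G H : sgraph) : sgraph := SGraph (@lex_sym G H) (@lex_irr G H).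

(* G -> (H_1,...,H_r)^v : every partition V(G) = X_1 u ... u X_r (given as a
   colouring c : V G -> 'I_r, X_i = c^-1(i)) has some i with G[X_i] containing H_i. *)
Definition arrows (G : sgraph) (r : nat) (Hs : 'I_r -> sgraph) : Prop :=
  forall c : V G -> 'I_r, exists i : 'I_r, contains_in [set x | c x == i] (Hs i).

Definition in_Fv (r : nat) (Hs : 'I_r -> sgraph) (k : nat) (G : sgraph) : Prop :=
  ~ contains G (K k) /\ arrows G Hs.

Definition is_Fv (r : nat) (Hs : 'I_r -> sgraph) (k : nat) (n : nat) : Prop :=
  (exists G, in_Fv Hs k G /\ #|V G| = n) /\
  (forall G, in_Fv Hs k G -> n <= #|V G|).

(* Blow up the extremal graphs: if G1 is a K_{a+1}-free graph arrowing
   (a_1,...,a_r) and G2 a K_{b+1}-free graph arrowing (H_1,...,H_r), then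
   G1[G2] is K_{ab+1}-free, since a clique of G1[G2] projects to a clique of G1
   whose fibres are cliques of G2.  It arrows (K_{a_1}[H_1],...,K_{a_r}[H_r]):
   colour each vertex u of G1 by an index i for which the copy {u} x G2
   contains H_i in colour i; then G1 contains K_{a_i} in that colour, and the
   copies of H_i over its vertices form K_{a_i}[H_i]. *)
From Stdlib Require Import ClassicalEpsilon.
From mathcomp Require Import all_boot.

Set Implicit Arguments.
Unset Strict Implicit.
Unset Printing Implicit Defensive.

Lemma is_cliqueP (G : sgraph) (S : {set V G}) :
  reflect {in S &, forall x y, x != y -> adj x y} (is_clique S).
Proof.
apply: (iffP forall_inP) => [clS x y xS yS | clS x xS].
  by move: (clS x xS) => /forall_inP/(_ y yS)/implyP.
by apply/forall_inP => y yS; apply/implyP; apply: clS.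
Qed.

Lemma clique_contains_K (G : sgraph) (S : {set V G}) k :
  is_clique S -> k <= #|S| -> contains G (K k).
Proof.
move=> /is_cliqueP clS le_k_S.
exists (fun i : 'I_k => enum_val (widen_ord le_k_S i)); split.
  by move=> i j /enum_val_inj/(congr1 val) ij; apply: val_inj.
move=> i j ij /=; apply: clS; try exact: enum_valP.
by rewrite (inj_eq enum_val_inj) -(inj_eq val_inj).
Qed.

Lemma Kfree_clique_card (G : sgraph) k :
  ~ contains G (K k.+1) -> forall S : {set V G}, is_clique S -> #|S| <= k.
Proof.
by move=> Kfree S clS; rewrite leqNgt; apply/negP => /(clique_contains_K clS).
Qed.

Lemma lex_clique_card (G1 G2 : sgraph) a b (S : {set V (lex G1 G2)}) :
  (forall S1 : {set V G1}, is_clique S1 -> #|S1| <= a) ->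
  (forall S2 : {set V G2}, is_clique S2 -> #|S2| <= b) ->
  is_clique S -> #|S| <= a * b.
Proof.
move=> bound1 bound2 /is_cliqueP clS.
pose S1 := [set p.1 | p in S].
have le_S1 : #|S1| <= a.
  apply/bound1/is_cliqueP => _ _ /imsetP[p pS ->] /imsetP[q qS ->] pq1.
  have pq : p != q by apply: contraNneq pq1 => ->.
  by move: (clS p q pS qS pq); rewrite /= /lex_adj (negbTE pq1) orbF.
have le_fibre u : #|[set p in S | p.1 == u]| <= b.
  rewrite -(@card_in_imset _ _ snd) => [|p q]; last first.
    rewrite !inE => /andP[_ /eqP] + /andP[_ /eqP].
    by case: p q => [? ?] [? ?] /= -> -> ->.
  apply/bound2/is_cliqueP => _ _ /imsetP[p + ->] /imsetP[q + ->].
  rewrite !inE => /andP[pS /eqP p1] /andP[qS /eqP q1] pq2.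
  have pq : p != q by apply: contraNneq pq2 => ->.
  by move: (clS p q pS qS pq); rewrite /= /lex_adj p1 q1 eqxx (@adj_irr G1).
rewrite -sum1_card (partition_big fst (mem S1)) => [|p pS]; last exact: imset_f.
apply: (@leq_trans (\sum_(u in S1) b)).
  apply: leq_sum => u _; apply: leq_trans (le_fibre u).
  by rewrite -sum1_card; apply: eq_leq; apply: eq_bigl => p; rewrite inE.
by rewrite sum_nat_const leq_mul2r le_S1 orbT.
Qed.

Lemma lex_Kfree (G1 G2 : sgraph) a b :
  ~ contains G1 (K a.+1) -> ~ contains G2 (K b.+1) ->
  ~ contains (lex G1 G2) (K (a * b).+1).
Proof.
move=> Kfree1 Kfree2 [f [inj_f adj_f]].
pose S := [set f i | i in 'I_(a * b).+1].
have clS : is_clique S.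
  apply/is_cliqueP => _ _ /imsetP[i _ ->] /imsetP[j _ ->] fij.
  by apply: adj_f; apply: contraNneq fij => ->.
have := lex_clique_card (Kfree_clique_card Kfree1) (Kfree_clique_card Kfree2) clS.
by rewrite card_imset // card_ord ltnn.
Qed.

Lemma lex_contains_in (G1 G2 A B : sgraph) (X : {set V (lex G1 G2)})
    (e : V A -> V G1) :
  injective e -> (forall x y, adj x y -> adj (e x) (e y)) ->
  (forall x, contains_in [set v | (e x, v) \in X] B) ->
  contains_in X (lex A B).
Proof.
move=> inj_e adj_e /ClassicalEpsilon.choice[g gP].
exists (fun p : V (lex A B) => (e p.1, g p.1 p.2)); split; [|split].
- move=> [x v] [y w] [/inj_e exy]; subst y.
  by have [inj_g _] := gP x; move/inj_g ->.
- by move=> [x v]; have [_ [gX _]] := gP x; move: (gX v); rewrite inE.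
move=> [x v] [y w] /orP[/adj_e exy | /andP[/eqP /= <- vw]].
  by rewrite /= /lex_adj exy.
by have [_ [_ adj_g]] := gP x; rewrite /= /lex_adj eqxx adj_g ?orbT.
Qed.

Lemma lex_arrows r (A H : 'I_r -> sgraph) (G1 G2 : sgraph) :
  arrows G1 A -> arrows G2 H -> arrows (lex G1 G2) (fun i => lex (A i) (H i)).
Proof.
move=> arrows1 arrows2 c.
have [d dP] : exists d : V G1 -> 'I_r,
    forall u, contains_in [set v | c (u, v) == d u] (H (d u)).
  apply: (ClassicalEpsilon.choice (fun u i => contains_in [set v | c (u, v) == i] (H i))).
  by move=> u; apply: arrows2.
have [i [e [inj_e [e_col adj_e]]]] := arrows1 d.
exists i; apply: (lex_contains_in inj_e adj_e) => k.
have -> : [set v | (e k, v) \in [set p | c p == i]] = [set v | c (e k, v) == i].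
  by apply/setP => v; rewrite !inE.
by move: (e_col k); rewrite inE => /eqP <-.
Qed.

Lemma in_Fv_lex r (ai : 'I_r -> nat) (H : 'I_r -> sgraph) a b (G1 G2 : sgraph) :
  in_Fv (fun i => K (ai i)) a.+1 G1 -> in_Fv H b.+1 G2 ->
  in_Fv (fun i => lex (K (ai i)) (H i)) (a * b).+1 (lex G1 G2).
Proof.
by move=> [? ?] [? ?]; split; [apply: lex_Kfree | apply: lex_arrows].
Qed.

Lemma is_Fv_le r (Hs : 'I_r -> sgraph) k (G : sgraph) :
  in_Fv Hs k G -> exists n, is_Fv Hs k n /\ n <= #|V G|.
Proof.
move=> GFv.
pose attained n := exists G', in_Fv Hs k G' /\ #|V G'| = n.
pose attainedb n := if excluded_middle_informative (attained n) then true else false.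
have attainedP n : reflect (attained n) (attainedb n).
  by rewrite /attainedb; case: excluded_middle_informative; constructor.
have [|n /attainedP n_attained n_min] := ex_minnP (P := attainedb).
  by exists #|V G|; apply/attainedP; exists G.
exists n; split; last by apply/n_min/attainedP; exists G.
by split=> // G' G'Fv; apply/n_min/attainedP; exists G'.
Qed.

(* The hypotheses bounding a_i and cl(H_i) only guarantee that the Folkman
   numbers exist; here their existence is assumed through [is_Fv]. *)
Theorem mainTheorem2 (r : nat) (ai : 'I_r -> nat) (a b : nat)
    (H : 'I_r -> sgraph) (n1 n2 : nat) :
  1 <= r ->
  (forall i, 2 <= ai i) -> 0 < a -> 0 < b ->
  (forall i, ai i <= a) ->
  (forall i, clique_number (H i) <= b) ->
  is_Fv (fun i => K (ai i)) a.+1 n1 ->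
  is_Fv H b.+1 n2 ->
  exists n, is_Fv (fun i => lex (K (ai i)) (H i)) (a * b).+1 n /\ n <= n1 * n2.
Proof.
move=> _ _ _ _ _ _ [[G1 [G1Fv <-]] _] [[G2 [G2Fv <-]] _].
have [n [nFv le_n]] := is_Fv_le (in_Fv_lex G1Fv G2Fv).
by exists n; split; rewrite // -card_prod.
Qed.
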